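(* Let $J,J^r:\mathbb{R}^n\to\mathbb{R}^k$ be continuously differentiable and let $\epsilon\in[0,\infty)^k$ satisfy $\sup_{u\in\mathbb{R}^n}\|\nabla J_i(u)-\nabla J_i^r(u)\|_2\le\epsilon_i$ for all $i\in\{1,\dots,k\}$. Let $P_c$ and $P_c^r$ denote the Pareto critical sets of $J$ and $J^r$, respectively, and define $$P_1^r:=\Big\{u\in\mathbb{R}^n:\min_{\alpha\in\Delta_k}\|DJ^r(u)^\top\alpha\|_2^2\le\|\epsilon\|_\infty^2\Big\},\qquad P_2^r:=\Big\{u\in\mathbb{R}^n:\min_{\alpha\in\Delta_k}\big(\|DJ^r(u)^\top\alpha\|_2^2-(\alpha^\top\epsilon)^2\big)\le 0\Big\}.$$ Then $P_c\subseteq P_2^r\subseteq P_1^r$ and $P_c^r\subseteq P_2^r\subseteq P_1^r$.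
   Context: $\Delta_k:=\{\alpha\in[0,\infty)^k:\sum_{i=1}^k\alpha_i=1\}$. For differentiable $J:\mathbb{R}^n\to\mathbb{R}^k$, $DJ(u)\in\mathbb{R}^{k\times n}$ is the Jacobian, so $DJ(u)^\top\alpha=\sum_i\alpha_i\nabla J_i(u)$. The Pareto critical set of $J$ is the set of all $u\in\mathbb{R}^n$ for which there exists $\alpha\in\Delta_k$ with $DJ(u)^\top\alpha=0$. *)

From Stdlib Require Import Reals.
Open Scope R_scope.

(* Vectors of R^m are modelled as functions nat -> R, of which only the
   coordinates 0..m-1 are used. *)

Fixpoint rsum (m : nat) (f : nat -> R) : R :=
  match m with
  | O => 0
  | S p => rsum p f + f p
  end.

Definition dot (m : nat) (u v : nat -> R) : R := rsum m (fun j => u j * v j).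

Definition norm2 (m : nat) (v : nat -> R) : R := sqrt (dot m v v).

Definition vadd (u v : nat -> R) : nat -> R := fun j => u j + v j.
Definition vsub (u v : nat -> R) : nat -> R := fun j => u j - v j.

Fixpoint linf (m : nat) (e : nat -> R) : R :=
  match m with
  | O => 0
  | S p => Rmax (linf p e) (Rabs (e p))
  end.

Definition has_gradient (n : nat) (f : (nat -> R) -> R) (u g : nat -> R) : Prop :=
  forall eps, 0 < eps -> exists delta, 0 < delta /\
    forall h, norm2 n h < delta ->
      Rabs (f (vadd u h) - f u - dot n g h) <= eps * norm2 n h.

Definition C1_with_gradient (n : nat) (f : (nat -> R) -> R)
  (G : (nat -> R) -> (nat -> R)) : Prop :=
  (forall u, has_gradient n f u (G u)) /\
  (forall u eps, 0 < eps -> exists delta, 0 < delta /\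
     forall v, norm2 n (vsub v u) < delta -> norm2 n (vsub (G v) (G u)) < eps).

Definition in_simplex (k : nat) (a : nat -> R) : Prop :=
  (forall i, (i < k)%nat -> 0 <= a i) /\ rsum k a = 1.

(* DJ(u)^T a = sum_i a_i grad J_i(u), where G i u = grad J_i(u) *)
Definition jacT (k : nat) (G : nat -> (nat -> R) -> (nat -> R)) (u a : nat -> R)
  : nat -> R := fun j => rsum k (fun i => a i * G i u j).

Definition pareto_critical (n k : nat) (G : nat -> (nat -> R) -> (nat -> R))
  (u : nat -> R) : Prop :=
  exists a, in_simplex k a /\ forall j, (j < n)%nat -> jacT k G u a j = 0.

Definition P1 (n k : nat) (Gr : nat -> (nat -> R) -> (nat -> R)) (e : nat -> R)
  (u : nat -> R) : Prop :=
  exists a, in_simplex k a /\ (norm2 n (jacT k Gr u a))^2 <= (linf k e)^2.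

Definition P2 (n k : nat) (Gr : nat -> (nat -> R) -> (nat -> R)) (e : nat -> R)
  (u : nat -> R) : Prop :=
  exists a, in_simplex k a /\ (norm2 n (jacT k Gr u a))^2 - (dot k a e)^2 <= 0.

(* The Jacobian transposes of J and J^r differ
   by DJ(u)^T a - DJ^r(u)^T a = sum_i a_i (grad J_i(u) - grad J^r_i(u)), whose
   norm is at most sum_i a_i e_i = a^T e by the triangle inequality.  Hence at
   a Pareto critical point of J, ||DJ^r(u)^T a|| <= a^T e, i.e. u is in P_2^r;
   at a Pareto critical point of J^r the norm is 0, which is even better.
   Finally 0 <= a^T e <= ||e||_inf because a is a convex combination, which
   gives P_2^r in P_1^r. *)

From Stdlib Require Import Reals Lra Lia Psatz.
Open Scope R_scope.

Lemma rsum_ext m f g :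
  (forall j, (j < m)%nat -> f j = g j) -> rsum m f = rsum m g.
Proof.
  induction m as [|m IH]; intros H; simpl; [reflexivity|].
  rewrite IH, H; [reflexivity | lia | intros; apply H; lia].
Qed.

Lemma rsum_le m f g :
  (forall j, (j < m)%nat -> f j <= g j) -> rsum m f <= rsum m g.
Proof.
  induction m as [|m IH]; intros H; simpl; [lra|].
  apply Rplus_le_compat; [apply IH; intros; apply H|apply H]; lia.
Qed.

Lemma rsum_plus m f g : rsum m (fun j => f j + g j) = rsum m f + rsum m g.
Proof. induction m as [|m IH]; simpl; [lra|]. rewrite IH. ring. Qed.

Lemma rsum_minus m f g : rsum m (fun j => f j - g j) = rsum m f - rsum m g.
Proof. induction m as [|m IH]; simpl; [ring|]. rewrite IH. ring. Qed.

Lemma rsum_opp m f : rsum m (fun j => - f j) = - rsum m f.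
Proof. induction m as [|m IH]; simpl; [ring|]. rewrite IH. ring. Qed.

Lemma rsum_scal_l m c f : rsum m (fun j => c * f j) = c * rsum m f.
Proof. induction m as [|m IH]; simpl; [ring|]. rewrite IH. ring. Qed.

Lemma rsum_0 m : rsum m (fun _ => 0) = 0.
Proof. induction m as [|m IH]; simpl; [|rewrite IH]; ring. Qed.

Lemma rsum_nonneg m f : (forall j, (j < m)%nat -> 0 <= f j) -> 0 <= rsum m f.
Proof. intros H. rewrite <- (rsum_0 m). apply rsum_le, H. Qed.

Lemma dot_self_nonneg n x : 0 <= dot n x x.
Proof. apply rsum_nonneg. intros. apply Rle_0_sqr. Qed.

Lemma Cauchy_Schwarz_step S A B a b :
  0 <= A -> 0 <= B -> S * S <= A * B ->
  (S + a * b) * (S + a * b) <= (A + a * a) * (B + b * b).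
Proof.
  intros HA HB HS.
  (* (A b^2 + B a^2)^2 - (2 S a b)^2 = (A b^2 - B a^2)^2 + 4 (A B - S^2) a^2 b^2 *)
  assert (Hsq : (2 * S * (a * b)) * (2 * S * (a * b))
                <= (A * (b * b) + B * (a * a)) * (A * (b * b) + B * (a * a))).
  { assert (0 <= (A * (b * b) - B * (a * a)) * (A * (b * b) - B * (a * a)))
      by apply Rle_0_sqr.
    assert (S * S * ((a * b) * (a * b)) <= A * B * ((a * b) * (a * b)))
      by (apply Rmult_le_compat_r; [apply Rle_0_sqr | exact HS]).
    nra. }
  assert (Hcross : 2 * S * (a * b) <= A * (b * b) + B * (a * a)).
  { apply Rsqr_incr_0_var; [exact Hsq|].
    apply Rplus_le_le_0_compat; apply Rmult_le_pos; auto; apply Rle_0_sqr. }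
  nra.
Qed.

Lemma Cauchy_Schwarz n x y : dot n x y * dot n x y <= dot n x x * dot n y y.
Proof.
  induction n as [|n IH]; unfold dot in *; simpl; [lra|].
  apply Cauchy_Schwarz_step; auto; apply dot_self_nonneg.
Qed.

Lemma norm2_pos n x : 0 <= norm2 n x.
Proof. apply sqrt_pos. Qed.

Lemma norm2_sqr n x : norm2 n x * norm2 n x = dot n x x.
Proof. apply sqrt_sqrt, dot_self_nonneg. Qed.

Lemma norm2_ext n x y :
  (forall j, (j < n)%nat -> x j = y j) -> norm2 n x = norm2 n y.
Proof.
  intros H. unfold norm2, dot. f_equal. apply rsum_ext. intros j Hj.
  rewrite H by exact Hj. reflexivity.
Qed.

Lemma norm2_0 n : norm2 n (fun _ => 0) = 0.
Proof.
  unfold norm2, dot. rewrite (rsum_ext n _ (fun _ => 0)), rsum_0.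
  - apply sqrt_0.
  - intros. ring.
Qed.

Lemma norm2_scal n c x : norm2 n (fun j => c * x j) = Rabs c * norm2 n x.
Proof.
  unfold norm2, dot. rewrite <- sqrt_Rsqr_abs, <- sqrt_mult_alt by apply Rle_0_sqr.
  f_equal. rewrite <- rsum_scal_l. apply rsum_ext. intros. unfold Rsqr. ring.
Qed.

Lemma norm2_opp n x : norm2 n (fun j => - x j) = norm2 n x.
Proof. unfold norm2, dot. f_equal. apply rsum_ext. intros. ring. Qed.

Lemma dot_le_norm2_mult n x y : dot n x y <= norm2 n x * norm2 n y.
Proof.
  unfold norm2. rewrite <- sqrt_mult_alt by apply dot_self_nonneg.
  eapply Rle_trans; [apply Rle_abs|]. rewrite <- sqrt_Rsqr_abs.
  apply sqrt_le_1_alt, Cauchy_Schwarz.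
Qed.

Lemma norm2_triangle n x y : norm2 n (vadd x y) <= norm2 n x + norm2 n y.
Proof.
  assert (Hexp : dot n (vadd x y) (vadd x y) = dot n x x + 2 * dot n x y + dot n y y).
  { unfold dot, vadd. rewrite <- rsum_scal_l, <- !rsum_plus.
    apply rsum_ext. intros. ring. }
  apply Rsqr_incr_0_var; [|apply Rplus_le_le_0_compat; apply norm2_pos].
  unfold Rsqr. rewrite norm2_sqr, Hexp.
  pose proof (norm2_sqr n x). pose proof (norm2_sqr n y).
  pose proof (dot_le_norm2_mult n x y). nra.
Qed.

Lemma norm2_rsum_le n k (v : nat -> nat -> R) :
  norm2 n (fun j => rsum k (fun i => v i j)) <= rsum k (fun i => norm2 n (v i)).
Proof.
  induction k as [|k IH]; simpl.
  - rewrite norm2_0. lra.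
  - eapply Rle_trans; [apply (norm2_triangle n (fun j => rsum k (fun i => v i j)) (v k))|].
    lra.
Qed.

Lemma linf_ge_Rabs k e i : (i < k)%nat -> Rabs (e i) <= linf k e.
Proof.
  induction k as [|k IH]; intros Hi; [lia|]. simpl.
  destruct (Nat.eq_dec i k) as [->|Hne]; [apply Rmax_r|].
  eapply Rle_trans; [apply IH; lia|apply Rmax_l].
Qed.

Lemma dot_le_linf k a e :
  (forall i, (i < k)%nat -> 0 <= a i) -> dot k a e <= rsum k a * linf k e.
Proof.
  intros Ha. rewrite Rmult_comm, <- rsum_scal_l. apply rsum_le. intros i Hi.
  rewrite Rmult_comm. apply Rmult_le_compat_r; [apply Ha, Hi|].
  eapply Rle_trans; [apply Rle_abs|apply linf_ge_Rabs, Hi].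
Qed.

Lemma dot_nonneg k a e :
  (forall i, (i < k)%nat -> 0 <= a i) -> (forall i, (i < k)%nat -> 0 <= e i) ->
  0 <= dot k a e.
Proof. intros Ha He. apply rsum_nonneg. intros. apply Rmult_le_pos; auto. Qed.

Lemma norm2_jacT_le n k G u a :
  (forall i, (i < k)%nat -> 0 <= a i) ->
  norm2 n (jacT k G u a) <= rsum k (fun i => a i * norm2 n (G i u)).
Proof.
  intros Ha. eapply Rle_trans; [apply (norm2_rsum_le n k (fun i j => a i * G i u j))|].
  apply rsum_le. intros i Hi. rewrite norm2_scal, Rabs_pos_eq by (apply Ha, Hi).
  apply Rle_refl.
Qed.

Lemma norm2_jacT_at_critical n k G Gr u a :
  (forall j, (j < n)%nat -> jacT k G u a j = 0) ->
  norm2 n (jacT k Gr u a) = norm2 n (jacT k (fun i v => vsub (G i v) (Gr i v)) u a).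
Proof.
  intros Hc.
  transitivity (norm2 n (fun j => - jacT k (fun i v => vsub (G i v) (Gr i v)) u a j)).
  - apply norm2_ext. intros j Hj. rewrite <- (Rminus_0_r (jacT k Gr u a j)), <- (Hc j Hj).
    unfold jacT, vsub. rewrite <- rsum_minus, <- rsum_opp.
    apply rsum_ext. intros. ring.
  - apply norm2_opp.
Qed.

Lemma P2_of_norm2_le n k Gr e u a :
  in_simplex k a -> norm2 n (jacT k Gr u a) <= dot k a e -> P2 n k Gr e u.
Proof.
  intros Ha Hle. exists a. split; [exact Ha|].
  pose proof (norm2_pos n (jacT k Gr u a)). simpl. nra.
Qed.

Theorem mainTheorem2 (n k : nat)
  (J Jr : nat -> (nat -> R) -> R)
  (G Gr : nat -> (nat -> R) -> (nat -> R))
  (e : nat -> R)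
  (hJ : forall i, (i < k)%nat -> C1_with_gradient n (J i) (G i))
  (hJr : forall i, (i < k)%nat -> C1_with_gradient n (Jr i) (Gr i))
  (he : forall i, (i < k)%nat -> 0 <= e i)
  (hsup : forall i, (i < k)%nat -> forall u, norm2 n (vsub (G i u) (Gr i u)) <= e i) :
  forall u : nat -> R,
    (pareto_critical n k G u -> P2 n k Gr e u) /\
    (P2 n k Gr e u -> P1 n k Gr e u) /\
    (pareto_critical n k Gr u -> P2 n k Gr e u).
Proof.
  intros u. split; [|split].
  - intros [a [Ha Hc]]. apply (P2_of_norm2_le n k Gr e u a Ha).
    rewrite (norm2_jacT_at_critical n k G Gr u a Hc).
    eapply Rle_trans; [apply norm2_jacT_le, Ha|].
    apply rsum_le. intros i Hi. apply Rmult_le_compat_l; [apply Ha, Hi|apply hsup, Hi].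
  - intros [a [Ha Hle]]. exists a. split; [exact Ha|].
    pose proof (dot_nonneg k a e (proj1 Ha) he) as Hpos.
    pose proof (dot_le_linf k a e (proj1 Ha)) as Hlinf.
    rewrite (proj2 Ha), Rmult_1_l in Hlinf.
    simpl in *. nra.
  - intros [a [Ha Hc]]. apply (P2_of_norm2_le n k Gr e u a Ha).
    rewrite (norm2_ext n _ (fun _ => 0) Hc), norm2_0.
    apply dot_nonneg; [apply Ha|exact he].
Qed.
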